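(* Let $T\in\{0,1\}$, $X\in\mathcal{X}\subset\mathbb{R}^d$ and real-valued potential outcomes $Y_0,Y_1$ be random variables on a common probability space, and let $p_F$ be the law of $(X,T,Y_T)$ and $p_{CF}$ the law of $(X,1-T,Y_{1-T})$. Let $B\sim\mathrm{Bernoulli}(1/2)$ be independent of $(X,T,Y_0,Y_1)$, let $S=T$ if $B=1$ and $S=1-T$ if $B=0$, let $p_{IF}$ be the law of $(X,S,Y_S)$ (so $p_{IF}=\tfrac12 p_F+\tfrac12 p_{CF}$, the ideal factual distribution) and $p_{ICF}$ the law of $(X,1-S,Y_{1-S})$ (its counterfactual distribution). Then for every measurable $h:\mathcal{X}\times\{0,1\}\to\mathbb{R}$, $\mathcal{L}_{p_{IF}}(h)=\mathcal{L}_{p_{ICF}}(h)$, where for a law $p$ of a triple $(X',T',Y')$, $\mathcal{L}_p(h)=\int (y-h(x,t))^2\,p(x,t,y)\,dx\,dt\,dy=\mathbb{E}[(Y'-h(X',T'))^2]\in[0,\infty]$.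
   Context: Potential-outcomes setting: $Y_t$ is the outcome that would be observed under treatment $t$; the counterfactual distribution of a factual law of $(X,T,Y_T)$ is the law obtained by inverting the treatment assignment, i.e. of $(X,1-T,Y_{1-T})$. *)

From HB Require Import structures.
From mathcomp Require Import all_boot all_order all_algebra.
From mathcomp Require Import all_classical all_reals all_analysis.
Set Implicit Arguments. Unset Strict Implicit. Unset Printing Implicit Defensive.
Import Order.TTheory GRing.Theory Num.Theory.
Local Open Scope classical_set_scope.
Local Open Scope ring_scope.

Definition indep_rv {d} {Omega : measurableType d} {R : realType}
  (P : probability Omega R) {dA dB} {A : measurableType dA} {B : measurableType dB}
  (U : Omega -> A) (V : Omega -> B) : Prop :=
  forall (EA : set A) (EB : set B), measurable EA -> measurable EB ->
    P (U @^-1` EA `&` V @^-1` EB) = (P (U @^-1` EA) * P (V @^-1` EB))%E.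

Definition sq_loss {d} {Omega : measurableType d} {R : realType}
  (P : probability Omega R) {n : nat}
  (X' : Omega -> n.-tuple R) (T' : Omega -> bool) (Y' : Omega -> R)
  (h : n.-tuple R * bool -> R) : \bar R :=
  (\int[P]_w ((Y' w - h (X' w, T' w)) ^+ 2)%:E)%E.

Definition sel_outcome {Omega R : Type} (Y0 Y1 : Omega -> R) (t : Omega -> bool)
  : Omega -> R := fun w => if t w then Y1 w else Y0 w.

From HB Require Import structures.
From mathcomp Require Import all_boot all_order all_algebra.
From mathcomp Require Import all_classical all_reals all_analysis.
From mathcomp Require Import ring.
From mathcomp Require Import measurable_realfun.
Import Order.TTheory GRing.Theory Num.Theory.
Local Open Scope classical_set_scope.
Local Open Scope ring_scope.

(* A fair coin B independent of V can be flipped without changing the joint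
   law of (B, V): both (B, V) and (~~ B, V) put mass P(V in A) / 2 on every
   rectangle {b} x A.  With V = (X, T, Y0, Y1), the ideal factual and
   counterfactual losses are the integrals of one function against these two
   laws, since flipping B exchanges S and 1 - S. *)

Section fair_coin_flip.
Context {R : realType} {d : measure_display} {Omega : measurableType d}
  {P : probability Omega R} {dV : measure_display} {V_T : measurableType dV}
  {B : Omega -> bool} {V : Omega -> V_T}.
Hypotheses (mB : measurable_fun setT B) (mV : measurable_fun setT V)
  (PB : P (B @^-1` [set true]) = (2^-1)%:E) (indB : indep_rv P B V).

Let measurable_B_preimage b : measurable (B @^-1` [set b]).
Proof. by rewrite -[X in measurable X]setTI; exact: mB. Qed.

Let measurable_V_preimage A : measurable A -> measurable (V @^-1` A).
Proof. by move=> mA; rewrite -[X in measurable X]setTI; exact: mV. Qed.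

Lemma fair_coin_preimage b : P (B @^-1` [set b]) = (2^-1)%:E.
Proof.
case: b => //.
have -> : B @^-1` [set false] = ~` (B @^-1` [set true]).
  by apply/seteqP; split => w /=; case: (B w).
by rewrite probability_setC // PB -EFinB; congr (_%:E); field.
Qed.

Lemma fair_coin_preimageI b A : measurable A ->
  P (B @^-1` [set b] `&` V @^-1` A) = ((2^-1)%:E * P (V @^-1` A))%E.
Proof. by move=> mA; rewrite indB // fair_coin_preimage. Qed.

Lemma fair_coin_flip_preimage E : measurable E ->
  P ((fun w => (B w, V w)) @^-1` E) = P ((fun w => (~~ B w, V w)) @^-1` E).
Proof.
move=> mE.
have mEb b : measurable (xsection E b) by exact: measurable_xsection.
have split_pair (G : Omega -> bool) : (fun w => (G w, V w)) @^-1` E =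
    (G @^-1` [set true] `&` V @^-1` xsection E true) `|`
    (G @^-1` [set false] `&` V @^-1` xsection E false).
  apply/seteqP; split => w /=.
    by rewrite /xsection /=; case: (G w) => Ew; [left|right]; split => //; rewrite inE.
  by rewrite /xsection /= => -[[-> /set_mem] | [-> /set_mem]].
have disjoint_pieces (G : Omega -> bool) (b : bool) (U U' : set V_T) :
    (G @^-1` [set b] `&` V @^-1` U) `&` (G @^-1` [set ~~ b] `&` V @^-1` U') = set0.
  by apply/seteqP; split => w //= [[-> _] [+ _]]; case: b.
have negb_preimage b : (fun w => ~~ B w) @^-1` [set b] = B @^-1` [set ~~ b].
  by apply/seteqP; split => w /=; case: (B w); case: b.
rewrite !split_pair !negb_preimage /=.
have mpiece b b' : measurable (B @^-1` [set b] `&` V @^-1` xsection E b').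
  by apply: measurableI; [exact: measurable_B_preimage | exact/measurable_V_preimage/mEb].
rewrite !measureU ?mpiece ?(disjoint_pieces B true) ?(disjoint_pieces B false) //.
by congr (_ + _);
  apply: etrans (fair_coin_preimageI _ _ (mEb _)) (esym (fair_coin_preimageI _ _ (mEb _))).
Qed.

Lemma ge0_integral_fair_coin_flip (D : set (bool * V_T)) (F : bool * V_T -> \bar R)
  (mD : measurable D) (DV : forall b w, D (b, V w))
  (mF : measurable_fun D F) (F0 : {in D, forall p, (0 <= F p)%E}) :
  (\int[P]_w F (B w, V w) = \int[P]_w F (~~ B w, V w))%E.
Proof.
have mBV : measurable_fun setT (fun w => (B w, V w)) by exact: measurable_fun_pair.
have mnBV : measurable_fun setT (fun w => (~~ B w, V w)).
  by apply: measurable_fun_pair => //; exact: measurableT_comp.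
have preimageD (G : Omega -> bool) : (fun w => (G w, V w)) @^-1` D = setT.
  by apply/seteqP; split => w //= _; exact: DV.
have integral_law (G : Omega -> bool) : measurable_fun setT (fun w => (G w, V w)) ->
    (\int[pushforward P (fun w => (G w, V w))]_(p in D) F p = \int[P]_w F (G w, V w))%E.
  by move=> mG; rewrite ge0_integral_pushforward // preimageD.
rewrite -(integral_law B mBV) -(integral_law (fun w => ~~ B w) mnBV).
apply: eq_measure_integral => A mA _.
exact: fair_coin_flip_preimage.
Qed.

End fair_coin_flip.

Section coin_sq_err.
Context {R : realType} {dX : measure_display} {X_T : measurableType dX}.

Definition coin_sq_err (h : X_T * bool -> R) (p : bool * (X_T * bool * R * R)) : R :=
  let: (b, (x, t, y0, y1)) := p in
  let s := if b then t else ~~ t in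
  ((if s then y1 else y0) - h (x, s)) ^+ 2.

Definition coin_dom (Xs : set X_T) : set (bool * (X_T * bool * R * R)) :=
  setT `*` (Xs `*` setT `*` setT `*` setT).

Lemma measurable_coin_dom {Xs : set X_T} : measurable Xs -> measurable (coin_dom Xs).
Proof.
by move=> mXs; apply: measurableX => //; do 2 apply: measurableX => //; exact: measurableX.
Qed.

Lemma measurable_coin_sq_err {Xs : set X_T} {h : X_T * bool -> R} :
  measurable Xs -> measurable_fun (Xs `*` setT) h ->
  measurable_fun (coin_dom Xs) (EFin \o coin_sq_err h).
Proof.
move=> mXs mh.
have mD := measurable_coin_dom mXs.
have mx : measurable_fun setT (fun p : bool * (X_T * bool * R * R) => p.2.1.1.1).
  by do 3 apply: measurableT_comp => //.
have mt : measurable_fun setT (fun p : bool * (X_T * bool * R * R) => p.2.1.1.2).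
  by do 3 apply: measurableT_comp => //.
have my0 : measurable_fun setT (fun p : bool * (X_T * bool * R * R) => p.2.1.2).
  by do 2 apply: measurableT_comp => //.
have my1 : measurable_fun setT (fun p : bool * (X_T * bool * R * R) => p.2.2).
  exact: measurableT_comp.
have ms : measurable_fun setT
    (fun p : bool * (X_T * bool * R * R) => if p.1 then p.2.1.1.2 else ~~ p.2.1.1.2).
  by apply: measurable_fun_ifT => //; exact: measurableT_comp.
have -> : coin_sq_err h = fun p =>
    let s := if p.1 then p.2.1.1.2 else ~~ p.2.1.1.2 in
    ((if s then p.2.2 else p.2.1.2) - h (p.2.1.1.1, s)) ^+ 2.
  by apply/funext => -[b [[[x t] y0] y1]].
apply/measurable_EFinP; apply: measurable_funX; apply: measurable_funB.
  by apply: measurable_funS (measurableT) _ _ => //; exact: measurable_fun_ifT.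
apply: (measurable_comp (F := Xs `*` setT)) => //.
- exact: measurableX.
- by move=> _ [p [_ [[[Xp _] _] _]] <-]; split.
- by apply: measurable_funS (measurableT) _ _ => //; exact: measurable_fun_pair.
Qed.

End coin_sq_err.

Theorem lemma3 (R : realType) (d0 : measure_display) (Omega : measurableType d0)
  (P : probability Omega R) (d : nat) (Xs : set (d.-tuple R))
  (X : Omega -> d.-tuple R) (T : Omega -> bool) (Y0 Y1 : Omega -> R)
  (B : Omega -> bool)
  (mXs : measurable Xs) (XinXs : forall w, Xs (X w))
  (mX : measurable_fun setT X) (mT : measurable_fun setT T)
  (mY0 : measurable_fun setT Y0) (mY1 : measurable_fun setT Y1)
  (mB : measurable_fun setT B)
  (PB : P (B @^-1` [set true]) = (2^-1)%:E)
  (indB : indep_rv P B (fun w => (X w, T w, Y0 w, Y1 w)))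
  (h : d.-tuple R * bool -> R) (mh : measurable_fun (Xs `*` setT) h) :
  let S := fun w => if B w then T w else ~~ T w in
  sq_loss P X S (sel_outcome Y0 Y1 S) h =
  sq_loss P X (fun w => ~~ S w) (sel_outcome Y0 Y1 (fun w => ~~ S w)) h.
Proof.
move=> S; rewrite /sq_loss.
pose V w := (X w, T w, Y0 w, Y1 w).
have mV : measurable_fun setT V.
  by do 3 apply: measurable_fun_pair => //.
transitivity (\int[P]_w (EFin \o coin_sq_err h) (B w, V w))%E; first by [].
transitivity (\int[P]_w (EFin \o coin_sq_err h) (~~ B w, V w))%E; last first.
  by apply: eq_integral => w _; rewrite /= /sel_outcome /S; case: (B w); case: (T w).
apply: (ge0_integral_fair_coin_flip mB mV PB indB _ _ _ _ (measurable_coin_sq_err mXs mh)).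
- exact: measurable_coin_dom.
- by move=> b w; do !split => //; exact: XinXs.
- by move=> -[b [[[x t] y0] y1]] _; rewrite lee_fin sqr_ge0.
Qed.
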